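(* Let $(\phi,y)$ be feasible for the joint routing and caching problem (minimize $T(\phi,y)=\sum_{(i,j)\in\mathcal E}D_{ij}(F_{ij})+\sum_i B_i(Y_i)$ subject to $\phi_{ij}(k),y_i(k)\in[0,1]$ and flow conservation), and suppose that for all $i\in\mathcal V,k\in\mathcal C$, with $$\delta_i(k)=\min\Big\{\frac{B_i'(Y_i)}{t_i(k)},\ \min_{j\in\mathcal N(i)}\Big(D'_{ji}(F_{ji})+\frac{\partial T}{\partial r_j(k)}\Big)\Big\}$$ (where $B_i'(Y_i)/t_i(k):=\infty$ if $t_i(k)=0$), we have: $B_i'(Y_i)=t_i(k)\delta_i(k)$ if $y_i(k)>0$ and $B_i'(Y_i)\ge t_i(k)\delta_i(k)$ if $y_i(k)=0$; and for all $j\in\mathcal N(i)$, $D'_{ji}(F_{ji})+\frac{\partial T}{\partial r_j(k)}=\delta_i(k)$ if $\phi_{ij}(k)>0$ and $\ge\delta_i(k)$ if $\phi_{ij}(k)=0$. Then for every feasible $(\phi^\dagger,y^\dagger)$ (with arrival rates $t^\dagger$), $$T(\phi^\dagger,y^\dagger)-T(\phi,y)\ \ge\ \sum_{i\in\mathcal V}\sum_{k\in\mathcal C}\delta_i(k)\big(y_i(k)-y_i^\dagger(k)\big)\big(t_i^\dagger(k)-t_i(k)\big).$$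
   Context: Network model. $\mathcal G=(\mathcal V,\mathcal E)$ is a finite directed graph with $(j,i)\in\mathcal E$ whenever $(i,j)\in\mathcal E$; $\mathcal N(i)=\{j:(i,j)\in\mathcal E\}$. $\mathcal C$ is a finite catalog; item $k$ has nonempty designated server set $\mathcal S_k\subseteq\mathcal V$. Exogenous request rates $r_i(k)\ge0$. Variables: $\phi_{ij}(k)\in[0,1]$ with $\phi_{ij}(k)=0$ if $(i,j)\notin\mathcal E$, and $y_i(k)\in[0,1]$. Flow conservation: $y_i(k)+\sum_{j}\phi_{ij}(k)=1$ if $i\notin\mathcal S_k$ and $=0$ if $i\in\mathcal S_k$. A pair $(\phi,y)$ is feasible if it satisfies these constraints and the arrival rates $t_i(k)$, solving $t_i(k)=r_i(k)+\sum_j t_j(k)\phi_{ji}(k)$, are uniquely determined and nonnegative (e.g. when $\phi$ is loop-free, i.e. for each $k$ the graph with edges $\{(i,j):\phi_{ij}(k)>0\}$ is acyclic). $f_{ji}(k)=t_i(k)\phi_{ij}(k)$, $F_{ij}=\sum_k f_{ij}(k)$, $Y_i=\sum_k y_i(k)$. $D_{ij},B_i$ are continuously differentiable, increasing, convex, zero at $0$. The marginal cost $\frac{\partial T}{\partial r_i(k)}$ satisfies $\frac{\partial T}{\partial r_i(k)}=\sum_{j\in\mathcal N(i)}\phi_{ij}(k)\big(D'_{ji}(F_{ji})+\frac{\partial T}{\partial r_j(k)}\big)$, and equals $0$ if $i\in\mathcal S_k$ or $y_i(k)=1$. *)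

From HB Require Import structures.
From mathcomp Require Import all_boot all_order all_algebra.
From mathcomp Require Import all_classical all_reals all_analysis.
Set Implicit Arguments. Unset Strict Implicit. Unset Printing Implicit Defensive.
Import Order.TTheory GRing.Theory Num.Theory.
Import numFieldNormedType.Exports.
Local Open Scope ring_scope.

Definition arrival_eq (R : realType) (V C : finType)
  (r : V -> C -> R) (phi : V -> V -> C -> R) (t : V -> C -> R) : Prop :=
  forall (i : V) (k : C), t i k = r i k + \sum_(j : V) t j k * phi j i k.

(* Link flow F_ab = sum_k f_ab(k), where f_ab(k) = t_b(k) phi_ba(k)
   (requests go b -> a, content comes back on link (a,b)). *)
Definition flow (R : realType) (V C : finType)
  (phi : V -> V -> C -> R) (t : V -> C -> R) (a b : V) : R :=
  \sum_(k : C) t b k * phi b a k.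

Definition cache_load (R : realType) (V C : finType)
  (y : V -> C -> R) (i : V) : R := \sum_(k : C) y i k.

Definition total_cost (R : realType) (V C : finType) (E : rel V)
  (D : V -> V -> R -> R) (B : V -> R -> R)
  (phi : V -> V -> C -> R) (y : V -> C -> R) (t : V -> C -> R) : R :=
  \sum_(i : V) \sum_(j : V | E i j) D i j (flow phi t i j)
  + \sum_(i : V) B i (cache_load y i).

Definition feasible (R : realType) (V C : finType) (E : rel V)
  (S : C -> {set V}) (r : V -> C -> R)
  (phi : V -> V -> C -> R) (y : V -> C -> R) : Prop :=
  [/\ (forall i j k, 0 <= phi i j k <= 1),
      (forall i j k, ~~ E i j -> phi i j k = 0),
      (forall i k, 0 <= y i k <= 1),
      (forall i k, y i k + \sum_(j : V) phi i j k = if i \in S k then 0 else 1) &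
      ((exists! t : V -> C -> R, arrival_eq r phi t) /\
       (forall t, arrival_eq r phi t -> forall i k, 0 <= t i k))].

Definition cost_fun (R : realType) (f : R -> R) : Prop :=
  [/\ f 0 = 0,
      (forall x : R, derivable f x 1),
      continuous (derive1 f),
      (forall x y : R, 0 <= x -> x < y -> f x < f y) &
      (forall x y a : R, 0 <= x -> 0 <= y -> 0 <= a <= 1 ->
         f (a * x + (1 - a) * y) <= a * f x + (1 - a) * f y)].

(* dT i k plays the role of dT/dr_i(k): it satisfies the marginal-cost recursion. *)
Definition marginal_cost (R : realType) (V C : finType) (E : rel V)
  (S : C -> {set V}) (D : V -> V -> R -> R)
  (phi : V -> V -> C -> R) (y : V -> C -> R) (t : V -> C -> R)
  (dT : V -> C -> R) : Prop :=
  forall i k,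
    dT i k = \sum_(j : V | E i j)
               phi i j k * (derive1 (D j i) (flow phi t j i) + dT j k)
    /\ ((i \in S k) || (y i k == 1) -> dT i k = 0).

Definition delta (R : realType) (V C : finType) (E : rel V)
  (D : V -> V -> R -> R) (B : V -> R -> R)
  (phi : V -> V -> C -> R) (y : V -> C -> R) (t : V -> C -> R)
  (dT : V -> C -> R) (i : V) (k : C) : \bar R :=
  Order.min
    (if t i k == 0 then +oo%E
     else ((derive1 (B i) (cache_load y i)) / t i k)%:E)
    (\big[Order.min/+oo%E]_(j : V | E i j)
        ((derive1 (D j i) (flow phi t j i) + dT j k)%:E)).

From HB Require Import structures.
From mathcomp Require Import all_boot all_order all_algebra.
From mathcomp Require Import all_classical all_reals all_analysis ring lra.
Set Implicit Arguments. Unset Strict Implicit. Unset Printing Implicit Defensive.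
Import Order.TTheory GRing.Theory Num.Theory.
Import numFieldNormedType.Exports.
Local Open Scope ring_scope.
Local Open Scope classical_set_scope.

(* The cost T is a sum of convex differentiable functions of the link flows
   F_ab and the cache loads Y_i, so T(phi',y') - T(phi,y) is bounded below by
   its first-order part  sum D'_ab(F_ab)(F'_ab - F_ab) + sum B'_i(Y_i)(Y'_i - Y_i)
   (tangent-line inequality).  Both flows and loads are sums over items k, so
   this first-order part splits into one term per item.  For a fixed item the
   arrival equations (identical exogenous rates r for both pairs) convert the
   weighted change of forwarded traffic into a change of arrival rates, and the
   marginal-cost recursion together with the optimality conditions (every
   positive phi_ij(k) has price delta_i(k), every price is >= delta_i(k), and
   the cache price equals t_i(k) delta_i(k) when y_i(k) > 0) bound the item's
   term from below, node by node, by  sum_i delta_i(k)(y_i-y'_i)(t'_i-t_i).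
   The only infinite value of delta_i(k) arises at an isolated node with no
   traffic, where the caching decision is forced and the term vanishes. *)

Lemma cost_fun_tangent (R : realType) (f : R -> R) (a b : R) :
  cost_fun f -> 0 <= a -> 0 <= b -> derive1 f a * (b - a) <= f b - f a.
Proof.
case=> _ hder _ _ hconv a0 b0.
have dif : differentiable f a := (derivable1_diffP f a).1 (hder a).
have dv : derivable f a (b - a) by apply: diff_derivable.
have -> : derive1 f a * (b - a) = 'D_(b - a) f a.
  rewrite deriveE // derive1E' // -[in RHS](mulr1 (b - a)).
  by rewrite -[(b - a) * 1]/((b - a) *: (1:R)) linearZ /= mulrC.
rewrite /derive cvg_at_rightE //.
set g := (fun h : R => _).
have cg : cvg (g @ 0^'+).
  apply/cvg_ex; exists (lim (g @ 0^')).
  move=> A /dv /nbhs_ballP [_ /posnumP[e] xe_A].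
  by exists e%:num => //= z xe_z; rewrite lt_def => /andP [xney _]; apply: xe_A.
apply: limr_le => //.
near=> h.
have h0 : 0 < h by near: h; exact: nbhs_right_gt.
have h1 : h <= 1 by near: h; exact: nbhs_right_le.
(* the difference quotient on [a, a + h(b-a)] is at most f b - f a by convexity *)
have chord := hconv b a h b0 a0 (introT andP (conj (ltW h0) h1)).
have mix : h * b + (1 - h) * a = h *: (b - a) + a by rewrite /GRing.scale /=; ring.
rewrite /g /= -[h^-1 *: _]/(h^-1 * _) mulrC ler_pdivrMr // mulrC /= -mix.
lra.
Unshelve. all: by end_near.
Qed.

Section Network.
Variables (R : realType) (V C : finType) (E : rel V) (S : C -> {set V}).
Variable r : V -> C -> R.

Definition demand (i : V) (k : C) : R := if i \in S k then 0 else 1.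

Lemma route_ge0 (phi : V -> V -> C -> R) (y : V -> C -> R) i j k :
  feasible E S r phi y -> 0 <= phi i j k.
Proof. by case=> /(_ i j k) /andP []. Qed.

Lemma route_off (phi : V -> V -> C -> R) (y : V -> C -> R) i j k :
  feasible E S r phi y -> ~~ E i j -> phi i j k = 0.
Proof. by case=> _ hoff _ _ _ /hoff. Qed.

Lemma cache_ge0 (phi : V -> V -> C -> R) (y : V -> C -> R) i k :
  feasible E S r phi y -> 0 <= y i k.
Proof. by case=> _ _ /(_ i k) /andP []. Qed.

Lemma forwarded_mass (phi : V -> V -> C -> R) (y : V -> C -> R) i k :
  feasible E S r phi y -> \sum_j phi i j k = demand i k - y i k.
Proof. by case=> _ _ _ hcons _; rewrite /demand -(hcons i k); ring. Qed.

(* At a node without neighbours nothing can be forwarded, so caching is forced. *)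
Lemma isolated_cache (phi : V -> V -> C -> R) (y : V -> C -> R) i k :
  feasible E S r phi y -> (forall j, ~~ E i j) -> y i k = demand i k.
Proof.
move=> hf hiso; have := forwarded_mass i k hf; rewrite big1 => [|j _].
  by move/eqP; rewrite eq_sym subr_eq0 => /eqP.
exact: route_off hf (hiso j).
Qed.

Lemma rates_ge0 (phi : V -> V -> C -> R) (y t : V -> C -> R) i k :
  feasible E S r phi y -> arrival_eq r phi t -> 0 <= t i k.
Proof. by case=> _ _ _ _ [_ hnn] /hnn. Qed.

(* Hence link flows and cache loads are nonnegative: convexity applies to them. *)
Lemma flow_ge0 (phi : V -> V -> C -> R) (y t : V -> C -> R) a b :
  feasible E S r phi y -> arrival_eq r phi t -> 0 <= flow phi t a b.
Proof.
move=> hf ht; apply: sumr_ge0 => k _.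
by apply: mulr_ge0; [exact: rates_ge0 hf ht | exact: route_ge0 hf].
Qed.

Lemma cache_load_ge0 (phi : V -> V -> C -> R) (y : V -> C -> R) i :
  feasible E S r phi y -> 0 <= cache_load y i.
Proof. by move=> hf; apply: sumr_ge0 => k _; exact: cache_ge0 hf. Qed.

Lemma arrival_exchange (phi phi' : V -> V -> C -> R) (t t' : V -> C -> R)
    (a : V -> R) k :
  arrival_eq r phi t -> arrival_eq r phi' t' ->
  \sum_i \sum_j a j * (t' i k * phi' i j k - t i k * phi i j k)
  = \sum_i a i * (t' i k - t i k).
Proof.
move=> ht ht'; rewrite exchange_big; apply: eq_bigr => j _ /=.
by rewrite -mulr_sumr sumrB [t' j k](ht' j k) [t j k](ht j k); ring.
Qed.

Lemma link_flow_regroup (phi phi' : V -> V -> C -> R) (t t' : V -> C -> R)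
    (g : V -> V -> R) :
  (forall i j, E i j -> E j i) ->
  (forall i j k, ~~ E i j -> phi i j k = 0) ->
  (forall i j k, ~~ E i j -> phi' i j k = 0) ->
  \sum_a \sum_(b | E a b) g a b * (flow phi' t' a b - flow phi t a b)
  = \sum_k \sum_i \sum_j g j i * (t' i k * phi' i j k - t i k * phi i j k).
Proof.
move=> hE hoff hoff'.
transitivity (\sum_a \sum_b \sum_k g a b * (t' b k * phi' b a k - t b k * phi b a k)).
  apply: eq_bigr => a _; rewrite big_mkcond /=; apply: eq_bigr => b _.
  case: ifPn => Eab; first by rewrite /flow -sumrB mulr_sumr.
  have nEba : ~~ E b a by apply: contra Eab; apply: hE.
  by rewrite big1 // => k _; rewrite hoff // hoff' // !mulr0 subrr mulr0.
rewrite exchange_big /=; under eq_bigr do rewrite exchange_big.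
by rewrite exchange_big.
Qed.

Lemma cache_load_regroup (y y' : V -> C -> R) (g : V -> R) :
  \sum_i g i * (cache_load y' i - cache_load y i)
  = \sum_k \sum_i g i * (y' i k - y i k).
Proof.
rewrite exchange_big; apply: eq_bigr => i _ /=.
by rewrite /cache_load -sumrB mulr_sumr.
Qed.

Lemma total_cost_tangent (D : V -> V -> R -> R) (B : V -> R -> R)
    (phi phi' : V -> V -> C -> R) (y y' t t' : V -> C -> R) :
  (forall i j, E i j -> cost_fun (D i j)) -> (forall i, cost_fun (B i)) ->
  feasible E S r phi y -> arrival_eq r phi t ->
  feasible E S r phi' y' -> arrival_eq r phi' t' ->
  \sum_a \sum_(b | E a b)
      derive1 (D a b) (flow phi t a b) * (flow phi' t' a b - flow phi t a b)
  + \sum_i derive1 (B i) (cache_load y i) * (cache_load y' i - cache_load y i)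
  <= total_cost E D B phi' y' t' - total_cost E D B phi y t.
Proof.
move=> hD hB hf ht hf' ht'.
rewrite /total_cost opprD addrACA; apply: lerD; rewrite -sumrB; apply: ler_sum => a _.
  rewrite -sumrB; apply: ler_sum => b Eab.
  exact: cost_fun_tangent (hD a b Eab) (flow_ge0 a b hf ht) (flow_ge0 a b hf' ht').
exact: cost_fun_tangent (hB a) (cache_load_ge0 a hf) (cache_load_ge0 a hf').
Qed.

End Network.
Arguments demand {R V C} S i k.

Section Delta.
Variables (R : realType) (V C : finType) (E : rel V).
Variables (D : V -> V -> R -> R) (B : V -> R -> R).
Variables (phi : V -> V -> C -> R) (y t dT : V -> C -> R).

Definition link_price (i j : V) (k : C) : R :=
  derive1 (D j i) (flow phi t j i) + dT j k.

Local Notation del := (delta E D B phi y t dT).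

Lemma delta_le_link i j k : E i j -> (del i k <= (link_price i j k)%:E)%E.
Proof. by move=> Eij; rewrite /delta ge_min (bigmin_le_cond _ _ Eij) orbT. Qed.

Lemma delta_gtNy i k : (-oo < del i k)%E.
Proof.
rewrite /delta lt_min; apply/andP; split; first by case: ifP; rewrite ?ltNye.
by apply: lt_bigmin => [|j _]; rewrite ltNye.
Qed.

Lemma delta_real_or_isolated i k :
  del i k = (fine (del i k))%:E \/
  [/\ del i k = +oo%E, t i k = 0 & forall j, ~~ E i j].
Proof.
case hv : (del i k) => [x||]; [by left | right | by move: (delta_gtNy i k); rewrite hv].
split=> //; last first.
  by move=> j; apply/negP => /(delta_le_link k); rewrite hv leye_eq.
have : (del i k <= if t i k == 0%R then +oo%E
                   else (derive1 (B i) (cache_load y i) / t i k)%R%:E)%E.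
  by rewrite /delta ge_min lexx.
by rewrite hv; case: eqP => // _; rewrite leye_eq.
Qed.

End Delta.

Definition optimality_conditions (R : realType) (V C : finType) (E : rel V)
    (D : V -> V -> R -> R) (B : V -> R -> R)
    (phi : V -> V -> C -> R) (y t dT : V -> C -> R) : Prop :=
  forall (i : V) (k : C),
    [/\ (0 < y i k ->
          ((derive1 (B i) (cache_load y i))%:E
            = (t i k)%:E * delta E D B phi y t dT i k)%E),
        (y i k = 0 ->
          ((t i k)%:E * delta E D B phi y t dT i k
            <= (derive1 (B i) (cache_load y i))%:E)%E) &
        (forall j : V, E i j ->
          (0 < phi i j k ->
             ((link_price D phi t dT i j k)%:E = delta E D B phi y t dT i k)%E)
          /\ (phi i j k = 0 ->
             (delta E D B phi y t dT i k <= (link_price D phi t dT i j k)%:E)%E))].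

Section Optimality.
Variables (R : realType) (V C : finType) (E : rel V) (S : C -> {set V}).
Variables (r : V -> C -> R) (D : V -> V -> R -> R) (B : V -> R -> R).
Variables (phi : V -> V -> C -> R) (y t dT : V -> C -> R).
Hypothesis hf : feasible E S r phi y.
Hypothesis ht : arrival_eq r phi t.
Hypothesis hdT : marginal_cost E S D phi y t dT.
Hypothesis hopt : optimality_conditions E D B phi y t dT.

Local Notation del := (delta E D B phi y t dT).
Local Notation d i k := (fine (del i k)).
Local Notation price := (link_price D phi t dT).
Local Notation cache_price i := (derive1 (B i) (cache_load y i)).

Lemma rate_times_delta i k : ((t i k)%:E * del i k = (t i k * d i k)%:E)%E.
Proof.
case: (delta_real_or_isolated E D B phi y t dT i k) => [-> | [-> -> _]].
  by rewrite EFinM.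
by rewrite mul0e mul0r.
Qed.

Lemma cache_price_used i k : 0 < y i k -> cache_price i = t i k * d i k.
Proof. by case: (hopt i k) => h _ _ /h; rewrite rate_times_delta => -[]. Qed.

Lemma cache_price_unused i k : y i k = 0 -> t i k * d i k <= cache_price i.
Proof. by case: (hopt i k) => _ h _ /h; rewrite rate_times_delta lee_fin. Qed.

Lemma link_price_ge i j k : E i j -> d i k <= price i j k.
Proof.
move=> Eij; case: (delta_real_or_isolated E D B phi y t dT i k) => [hd|[_ _]].
  by have := delta_le_link D B phi y t dT k Eij; rewrite hd lee_fin.
by move/(_ j); rewrite Eij.
Qed.

Lemma link_price_used i j k : E i j -> 0 < phi i j k -> price i j k = d i k.
Proof.
move=> Eij hp; case: (delta_real_or_isolated E D B phi y t dT i k) => [hd|[_ _]].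
  by case: (hopt i k) => _ _ /(_ j Eij) [/(_ hp)]; rewrite hd => -[].
by move/(_ j); rewrite Eij.
Qed.

Lemma marginal_cost_prices i k : dT i k = \sum_j price i j k * phi i j k.
Proof.
case: (hdT i k) => -> _; rewrite big_mkcond /=; apply: eq_bigr => j _.
case: ifPn => Eij; first by rewrite mulrC.
by rewrite (route_off k hf Eij) mulr0.
Qed.

Lemma marginal_cost_delta i k : dT i k = d i k * (demand S i k - y i k).
Proof.
rewrite marginal_cost_prices -(forwarded_mass i k hf) mulr_sumr.
apply: eq_bigr => j _; case: (boolP (E i j)) => Eij; last first.
  by rewrite (route_off k hf Eij) !mulr0.
have := route_ge0 i j k hf; rewrite le_eqVlt => /orP [/eqP <-|hp].
  by rewrite !mulr0.
by rewrite link_price_used // mulrC.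
Qed.

Lemma delta_term_real (phi' : V -> V -> C -> R) (y' : V -> C -> R) i k z :
  feasible E S r phi' y' ->
  (del i k * ((y i k - y' i k) * z)%:E = (d i k * ((y i k - y' i k) * z))%:E)%E.
Proof.
move=> hf'; case: (delta_real_or_isolated E D B phi y t dT i k) => [-> | [-> _ hiso]].
  by rewrite EFinM.
by rewrite (isolated_cache k hf hiso) (isolated_cache k hf' hiso) subrr !mul0r mule0.
Qed.

Section Comparison.
Variables (phi' : V -> V -> C -> R) (y' t' : V -> C -> R).
Hypothesis hf' : feasible E S r phi' y'.
Hypothesis ht' : arrival_eq r phi' t'.

(* Node-wise bound: forwarding of the competitor costs at least delta per unit,
   and its caching changes are priced at least as in the optimum. *)
Lemma node_bound i k :
  d i k * ((y i k - y' i k) * (t' i k - t i k))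
  <= t' i k * \sum_j price i j k * phi' i j k - t' i k * dT i k
     + cache_price i * (y' i k - y i k).
Proof.
have t'ge0 : 0 <= t' i k := rates_ge0 i k hf' ht'.
have forward : t' i k * (d i k * (demand S i k - y' i k))
               <= t' i k * \sum_j price i j k * phi' i j k.
  apply: ler_wpM2l => //; rewrite -(forwarded_mass i k hf') mulr_sumr.
  apply: ler_sum => j _.
  case: (boolP (E i j)) => Eij; last by rewrite (route_off k hf' Eij) !mulr0.
  by apply: ler_wpM2r; [exact: route_ge0 hf' | exact: link_price_ge].
have cache : t i k * d i k * (y' i k - y i k) <= cache_price i * (y' i k - y i k).
  have := cache_ge0 i k hf; rewrite le_eqVlt => /orP [/eqP y0|hp].
    rewrite -y0 subr0.
    by apply: ler_wpM2r; [exact: cache_ge0 hf' | exact: cache_price_unused].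
  by rewrite (cache_price_used hp).
rewrite marginal_cost_delta; nra.
Qed.

Lemma item_bound k :
  \sum_i d i k * ((y i k - y' i k) * (t' i k - t i k))
  <= \sum_i \sum_j derive1 (D j i) (flow phi t j i)
                   * (t' i k * phi' i j k - t i k * phi i j k)
     + \sum_i cache_price i * (y' i k - y i k).
Proof.
have node_links i : \sum_j price i j k * (t' i k * phi' i j k - t i k * phi i j k)
    = t' i k * \sum_j price i j k * phi' i j k - t i k * dT i k.
  rewrite (marginal_cost_prices i k) !mulr_sumr -sumrB.
  by apply: eq_bigr => j _; ring.
have links : \sum_i \sum_j derive1 (D j i) (flow phi t j i)
                   * (t' i k * phi' i j k - t i k * phi i j k)
    = \sum_i (t' i k * \sum_j price i j k * phi' i j k - t' i k * dT i k).
  transitivity (\sum_i \sum_j price i j k * (t' i k * phi' i j k - t i k * phi i j k)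
                - \sum_i \sum_j dT j k * (t' i k * phi' i j k - t i k * phi i j k)).
    rewrite -sumrB; apply: eq_bigr => i _; rewrite -sumrB.
    by apply: eq_bigr => j _; rewrite /link_price; ring.
  rewrite (arrival_exchange (fun j => dT j k) k ht ht') -sumrB.
  by apply: eq_bigr => i _; rewrite node_links; ring.
by rewrite links -big_split; apply: ler_sum => i _; exact: node_bound.
Qed.

End Comparison.

End Optimality.

Theorem theorem3 (R : realType) (V C : finType) (E : rel V)
  (S : C -> {set V}) (r : V -> C -> R)
  (D : V -> V -> R -> R) (B : V -> R -> R)
  (hE : forall i j, E i j -> E j i)
  (hS : forall k, S k != finset.set0)
  (hr : forall i k, 0 <= r i k)
  (hD : forall i j, E i j -> cost_fun (D i j))
  (hB : forall i, cost_fun (B i))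
  (phi : V -> V -> C -> R) (y : V -> C -> R) (t : V -> C -> R)
  (dT : V -> C -> R)
  (hfeas : feasible E S r phi y)
  (ht : arrival_eq r phi t)
  (hdT : marginal_cost E S D phi y t dT)
  (hopt : forall (i : V) (k : C),
     [/\ (0 < y i k ->
           ((derive1 (B i) (cache_load y i))%:E
             = (t i k)%:E * delta E D B phi y t dT i k)%E),
         (y i k = 0 ->
           ((t i k)%:E * delta E D B phi y t dT i k
             <= (derive1 (B i) (cache_load y i))%:E)%E) &
         (forall j : V, E i j ->
           (0 < phi i j k ->
              ((derive1 (D j i) (flow phi t j i) + dT j k)%:E
                = delta E D B phi y t dT i k)%E)
           /\ (phi i j k = 0 ->
              (delta E D B phi y t dT i k
                <= (derive1 (D j i) (flow phi t j i) + dT j k)%:E)%E))]) :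
  forall (phi' : V -> V -> C -> R) (y' : V -> C -> R) (t' : V -> C -> R),
    feasible E S r phi' y' -> arrival_eq r phi' t' ->
    (\sum_(i : V) \sum_(k : C)
        delta E D B phi y t dT i k * ((y i k - y' i k) * (t' i k - t i k))%:E
      <= (total_cost E D B phi' y' t' - total_cost E D B phi y t)%:E)%E.
Proof.
move=> phi' y' t' hfeas' ht'.
have hoff i j k : ~~ E i j -> phi i j k = 0 := route_off k hfeas.
have hoff' i j k : ~~ E i j -> phi' i j k = 0 := route_off k hfeas'.
under eq_bigr => i _.
  under eq_bigr => k _ do rewrite (delta_term_real D B t dT hfeas i k _ hfeas').
  rewrite sumEFin; over.
rewrite sumEFin lee_fin exchange_big /=.
apply: le_trans (total_cost_tangent hD hB hfeas ht hfeas' ht').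
rewrite (link_flow_regroup t t' _ hE hoff hoff') cache_load_regroup -big_split.
by apply: ler_sum => k _; exact: (item_bound hfeas ht hdT hopt hfeas' ht' k).
Qed.
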